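(* Let $q$ be a positive integer and $I\subseteq\{0,1,\dots,q-1\}$, with complement $I^c=\{0,1,\dots,q-1\}\setminus I$. Let $k_1,k_2\ge0$, $p_i\ge 0$ ($1\le i\le k_1$), $q_i\ge0$ ($1\le i\le k_2$) be integers and $s_i,a_{ij},t_i,b_{ij},a,\nu$ integers (empty sums are $0$). Let $B(n)=\lceil n/q\rceil$. Then $$B(n)=\sum_{i=1}^{k_1}B\Big(n-s_i-\sum_{j=1}^{p_i}B(n-a_{ij})\Big)+\sum_{i=1}^{k_2}B\Big(-t_i+\sum_{j=1}^{q_i}B(n-b_{ij})\Big)+B\Big(n-a-\sum_{j\in I}B(n-j)\Big)+\nu$$ holds for all integers $n$ if and only if $$B(n)=\sum_{i=1}^{k_1}B\Big(n-s_i-\sum_{j=1}^{p_i}B(n-a_{ij})\Big)+\sum_{i=1}^{k_2}B\Big(-t_i+\sum_{j=1}^{q_i}B(n-b_{ij})\Big)+B\Big(-a+\sum_{j\in I^c}B(n-j)\Big)+\nu$$ holds for all integers $n$.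
   Context: Equivalently: $\lceil n/q\rceil$ formally satisfies the first recursion (with a Conolly-type term $R(n-a-\sum_{j\in I}R(n-j))$) if and only if it formally satisfies the second (with the Conway-type term $R(-a+\sum_{j\notin I}R(n-j))$), where formal satisfaction means the equation holds for all integers $n$ after substituting $\lceil \cdot/q\rceil$ for $R$. *)

From Stdlib Require Import ZArith List.
Import ListNotations.
Open Scope Z_scope.

(* ceiling division: ceil(n/q) for q > 0 (Z.div rounds toward -infinity) *)
Definition ceilq (q n : Z) : Z := - ((- n) / q).

Definition sumZ (l : list Z) : Z := fold_right Z.add 0 l.

Definition sum_range_filter (q : nat) (P : nat -> bool) (f : Z -> Z) : Z :=
  sumZ (map (fun j => f (Z.of_nat j)) (filter P (seq 0 q))).

Definition common_part (B : Z -> Z)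
  (A : list (Z * list Z)) (T : list (Z * list Z)) (n : Z) : Z :=
  sumZ (map (fun sa => B (n - fst sa - sumZ (map (fun aij => B (n - aij)) (snd sa)))) A)
  + sumZ (map (fun tb => B (- fst tb + sumZ (map (fun bij => B (n - bij)) (snd tb)))) T).

(* The two recursions differ only in the argument of their last term, and those
   arguments agree: by Hermite's identity for the ceiling,
   sum_{j=0}^{q-1} ceil((n - j)/q) = n, so that
   n - sum_{j in I} ceil((n - j)/q) = sum_{j notin I} ceil((n - j)/q). *)

From Stdlib Require Import ZArith List Lia.
Open Scope Z_scope.

Lemma sumZ_app (l1 l2 : list Z) : sumZ (l1 ++ l2) = sumZ l1 + sumZ l2.
Proof. induction l1 as [|x l1 IH]; unfold sumZ in *; cbn; lia. Qed.

Lemma sumZ_map_filter_split {X : Type} (P : X -> bool) (g : X -> Z) (l : list X) :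
  sumZ (map g (filter P l)) + sumZ (map g (filter (fun x => negb (P x)) l))
  = sumZ (map g l).
Proof.
  induction l as [|x l IH]; unfold sumZ in *; cbn; [|destruct (P x); cbn]; lia.
Qed.

Lemma sum_range_filter_split (q : nat) (P : nat -> bool) (f : Z -> Z) :
  sum_range_filter q P f + sum_range_filter q (fun j => negb (P j)) f
  = sumZ (map (fun j => f (Z.of_nat j)) (seq 0 q)).
Proof. apply sumZ_map_filter_split. Qed.

Lemma ceilq_mul_add_sub (q m r j : Z) : 0 < q -> 0 <= r < q -> 0 <= j < q ->
  ceilq q (q * m + r - j) = m + (if j <? r then 1 else 0).
Proof.
  intros Hq Hr Hj; unfold ceilq.
  replace (- (q * m + r - j)) with ((j - r) + (- m) * q) by lia.
  rewrite Z.div_add by lia.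
  destruct (Z.ltb_spec j r) as [Hjr | Hrj].
  - assert (Hdiv : (j - r) / q = -1).
    { symmetry; apply Z.div_unique with (r := j - r + q); lia. }
    lia.
  - rewrite Z.div_small by lia; lia.
Qed.

Lemma sum_ceilq_prefix (q : nat) (m r : Z) (k : nat) :
  0 <= r < Z.of_nat q -> (k <= q)%nat ->
  sumZ (map (fun j => ceilq (Z.of_nat q) (Z.of_nat q * m + r - Z.of_nat j)) (seq 0 k))
  = Z.of_nat k * m + Z.min (Z.of_nat k) r.
Proof.
  intros Hr; induction k as [|k IH]; intros Hk; [unfold sumZ; cbn; lia|].
  rewrite seq_S, map_app, sumZ_app, IH, Nat2Z.inj_succ by lia; cbn [map].
  rewrite ceilq_mul_add_sub by lia.
  unfold sumZ; cbn; destruct (Z.ltb_spec (Z.of_nat k) r); lia.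
Qed.

Lemma hermite_ceilq (q : nat) (n : Z) : (0 < q)%nat ->
  sumZ (map (fun j => ceilq (Z.of_nat q) (n - Z.of_nat j)) (seq 0 q)) = n.
Proof.
  intros Hq.
  pose proof (Z.div_mod n (Z.of_nat q) ltac:(lia)) as Hn.
  pose proof (Z.mod_pos_bound n (Z.of_nat q) ltac:(lia)) as Hr.
  rewrite Hn, sum_ceilq_prefix by lia; lia.
Qed.

Lemma conolly_arg_eq_conway_arg (q : nat) (inI : nat -> bool) (a n : Z) :
  (0 < q)%nat ->
  n - a - sum_range_filter q inI (fun j => ceilq (Z.of_nat q) (n - j))
  = - a + sum_range_filter q (fun j => negb (inI j)) (fun j => ceilq (Z.of_nat q) (n - j)).
Proof.
  intros Hq.
  pose proof (sum_range_filter_split q inI (fun j => ceilq (Z.of_nat q) (n - j))) as Hsplit.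
  cbv beta in Hsplit; rewrite hermite_ceilq in Hsplit by exact Hq.
  lia.
Qed.

Theorem theorem7 (q : nat) (hq : (0 < q)%nat) (inI : nat -> bool)
  (A T : list (Z * list Z)) (a nu : Z) :
  (forall n : Z,
     ceilq (Z.of_nat q) n =
       common_part (ceilq (Z.of_nat q)) A T n
       + ceilq (Z.of_nat q)
           (n - a - sum_range_filter q inI (fun j => ceilq (Z.of_nat q) (n - j)))
       + nu)
  <->
  (forall n : Z,
     ceilq (Z.of_nat q) n =
       common_part (ceilq (Z.of_nat q)) A T n
       + ceilq (Z.of_nat q)
           (- a + sum_range_filter q (fun j => negb (inI j))
                    (fun j => ceilq (Z.of_nat q) (n - j)))
       + nu).
Proof.
  split; intros H n; rewrite H, (conolly_arg_eq_conway_arg q inI a n hq); reflexivity.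
Qed.
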